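(* Let $(X,\mathcal{F})$ be a measurable lamination admitting a regular foliated measurable atlas, and let $h:T\to T'$ be a measurable holonomy map between transversals. Then there exists a measurable homotopy $H:T\times\mathbb{R}\to X$ such that $H(t,0)=t$ and $H(t,1)=h(t)$ for all $t\in T$.
   Context: Measurable lamination: an MT-space (set with $\sigma$-algebra and topology) covered by countably many measurable open sets with MT-isomorphisms onto $B\times T$, $B$ an open ball in $\mathbb{R}^n$, $T$ standard Borel (product of Euclidean and discrete topologies, product $\sigma$-algebra); leaves are connected components. A foliated measurable atlas is regular if each chart $(U,\varphi)$ is the restriction of a chart $(W,\psi)$ with $\overline U\subset W$ and plaques of $U$ having compact closure, and each plaque of a chart meets at most one plaque of any other chart. A transversal is a measurable set meeting each leaf countably; a measurable holonomy map is a measurable isomorphism $h:T\to T'$ between transversals with $h(t)$ in the leaf of $t$. A measurable homotopy $T\times\mathbb{R}\to X$ is an MT-map (measurable, continuous) where $T\times\mathbb{R}$ has the topology of $\mathbb{R}$ on each $\{t\}\times\mathbb{R}$ and $T$ discrete. *)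

From HB Require Import structures.
From mathcomp Require Import all_boot all_order all_algebra.
From mathcomp Require Import all_classical all_reals all_analysis.
From mathcomp Require Import Rstruct Rstruct_topology.

Set Implicit Arguments.
Unset Strict Implicit.
Unset Printing Implicit Defensive.
Import Order.TTheory GRing.Theory Num.Theory.
Local Open Scope classical_set_scope.
Local Open Scope ring_scope.

Notation R := Rdefinitions.R.

Notation Rn n := 'rV[R]_n.

Definition eball (n : nat) (c : Rn n) (r : R) : set (Rn n) :=
  [set x | \sum_(i < n) (x ord0 i - c ord0 i) ^+ 2 < r ^+ 2].

Definition eopen (n : nat) (W : set (Rn n)) : Prop :=
  forall x, W x -> exists2 e : R, 0 < e & eball x e `<=` W.

Definition borel (Z : topologicalType) : set (set Z) := <<s [set A | open A] >>.

Definition borelRn (n : nat) : set (set (Rn n)) := <<s [set A | eopen A] >>.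

(** Topology on R^n x T where T carries the discrete topology:
    a set is open iff each horizontal slice is open in R^n. *)
Definition EDopen (n : nat) (W : set (Rn n * R)) : Prop :=
  forall t : R, eopen [set x | W (x, t)].

Definition EDmeas (n : nat) : set (set (Rn n * R)) :=
  <<s [set A `*` C | A in @borelRn n & C in @borel R] >>.

Definition MT_iso (X : topologicalType) (measX : set (set X)) (Z : Type)
    (openZ measZ : set (set Z)) (U : set X) (A : set Z) (f : X -> Z) : Prop :=
  [/\ set_bij U A f,
      (forall W, W `<=` A -> (openZ W <-> open (U `&` f @^-1` W))) &
      (forall W, W `<=` A -> (measZ W <-> measX (U `&` f @^-1` W)))].

(** Standard Borel spaces are (by Kuratowski) exactly the measurable spaces
    Borel-isomorphic to a Borel subset of R; so a chart onto B x T with T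
    standard Borel is encoded as a chart onto B x S with S a Borel subset of R
    (T carrying the discrete topology). *)
Definition MT_chart (X : topologicalType) (measX : set (set X)) (n : nat)
    (U : set X) (phi : X -> Rn n * R) : Prop :=
  [/\ open U, measX U &
      exists (c : Rn n) (r : R) (S : set R),
        [/\ 0 < r, borel S &
            MT_iso measX (@EDopen n) (@EDmeas n) U (eball c r `*` S) phi]].

Definition plaque (X : Type) (n : nat) (U : set X) (phi : X -> Rn n * R)
    (P : set X) : Prop :=
  exists2 x, U x & P = [set y | U y /\ (phi y).2 = (phi x).2].

Definition fol_meas_atlas (X : topologicalType) (measX : set (set X)) (n : nat)
    (At : set (set X * (X -> Rn n * R))) : Prop :=
  [/\ countable At,
      (forall c, At c -> MT_chart measX c.1 c.2) &
      (forall x : X, exists2 c, At c & c.1 x)].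

Definition regular_atlas (X : topologicalType) (measX : set (set X)) (n : nat)
    (At : set (set X * (X -> Rn n * R))) : Prop :=
  fol_meas_atlas measX At /\
  forall c, At c ->
    [/\ (exists (W : set X) (psi : X -> Rn n * R),
           [/\ MT_chart measX W psi, closure c.1 `<=` W &
               forall x, c.1 x -> c.2 x = psi x]),
        (forall P, plaque c.1 c.2 P -> compact (closure P)) &
        (forall c', At c' -> forall P P1 P2, plaque c.1 c.2 P ->
           plaque c'.1 c'.2 P1 -> plaque c'.1 c'.2 P2 ->
           P `&` P1 !=set0 -> P `&` P2 !=set0 -> P1 = P2)].

Definition meas_lamination (X : topologicalType) (measX : set (set X)) (n : nat) : Prop :=
  sigma_algebra setT measX /\ exists At, @fol_meas_atlas X measX n At.

Definition leaf (X : topologicalType) (x : X) : set X := connected_component setT x.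

Definition transversal (X : topologicalType) (measX : set (set X)) (T : set X) : Prop :=
  measX T /\ forall x : X, countable (T `&` leaf x).

Definition meas_holonomy (X : topologicalType) (measX : set (set X))
    (T T' : set X) (h : X -> X) : Prop :=
  [/\ transversal measX T, transversal measX T',
      set_bij T T' h,
      (forall A, A `<=` T' -> (measX A <-> measX (T `&` h @^-1` A))) &
      (forall t, T t -> leaf t (h t))].

Definition XRmeas (X : topologicalType) (measX : set (set X)) : set (set (X * R)) :=
  <<s [set A `*` C | A in measX & C in @borel R] >>.

(** Measurable homotopy T x R -> X: an MT-map, where T x R has the trace of the
    product sigma-algebra and the topology (T discrete) x (R usual). *)
Definition meas_homotopy (X : topologicalType) (measX : set (set X))
    (T : set X) (H : X * R -> X) : Prop :=
  (forall t, T t -> continuous (fun s : R => H (t, s))) /\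
  (forall A, measX A -> XRmeas measX ((T `*` setT) `&` H @^-1` A)).

From mathcomp Require Import all_boot all_order all_algebra.
From mathcomp Require Import all_classical all_reals all_analysis.
From mathcomp Require Import Rstruct Rstruct_topology.
From mathcomp Require Import lra ring.
Import Order.TTheory GRing.Theory Num.Theory.
Local Open Scope classical_set_scope.
Local Open Scope ring_scope.
Set Implicit Arguments.
Unset Strict Implicit.
Unset Printing Implicit Defensive.

(* Inside the plaque of a chart, the straight segment (in ball coordinates)
   from a point to the point with given ball coordinate is a continuous path.
   A rational chain from x to z is a finite list of such moves, each to a
   point with rational ball coordinates, ending in the plaque of z of some
   chart; concatenating the segments gives a path from x to z.  The points
   reachable from t by rational chains form an open set with open complement,
   because rational points are dense in plaques, so they exhaust the leaf of
   t, which contains h t.  Chains form a countable set: coding them by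
   natural numbers, the set of t in T whose least working code is k is
   measurable, and on it the path induced by that chain depends jointly
   measurably on (t, s), since charts are MT-isomorphisms and an open set
   hit by a segment is hit by all segments with endpoints in some rational
   boxes.  Gluing these countably many pieces gives the homotopy. *)

Section SigmaAlgebra.
Context {T : Type} (M : set (set T)) (HM : sigma_algebra setT M).

Lemma sigma0 : M set0. Proof. by case: HM. Qed.

Lemma sigmaC A : M A -> M (~` A).
Proof. by case: HM => _ MD _ /MD; rewrite setTD. Qed.

Lemma sigmaT : M setT.
Proof. by rewrite -setC0; apply/sigmaC/sigma0. Qed.

Lemma bigcupT_sigma (F : (set T)^nat) : (forall k, M (F k)) -> M (\bigcup_k F k).
Proof. by case: HM => _ _; apply. Qed.

Lemma bigcapT_sigma (F : (set T)^nat) : (forall k, M (F k)) -> M (\bigcap_k F k).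
Proof.
by move=> MF; rewrite -[X in M X]setCK setC_bigcap; apply/sigmaC/bigcupT_sigma => k; apply/sigmaC.
Qed.

Lemma sigmaU A B : M A -> M B -> M (A `|` B).
Proof.
by move=> MA MB; rewrite -bigcup2E; apply: bigcupT_sigma => -[|[|k]] //=; apply: sigma0.
Qed.

Lemma sigmaI A B : M A -> M B -> M (A `&` B).
Proof. by move=> MA MB; rewrite -[A `&` B]setCK setCI; apply/sigmaC/sigmaU; apply/sigmaC. Qed.

Lemma sigmaD A B : M A -> M B -> M (A `\` B).
Proof. by move=> MA MB; rewrite setDE; apply/sigmaI/sigmaC. Qed.

Lemma bigcup_count_sigma (I : countType) (F : I -> set T) :
  (forall i, M (F i)) -> M (\bigcup_i F i).
Proof.
move=> MF; have -> : \bigcup_i F i = \bigcup_k oapp F set0 (unpickle k).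
  apply/seteqP; split=> x [i _ Fx]; first by exists (pickle i); rewrite //= pickleK.
  by move: Fx; case: (unpickle i) => //= j; exists j.
by apply: bigcupT_sigma => k; case: (unpickle k) => /=; [apply: MF|apply: sigma0].
Qed.

Lemma bigcap_count_sigma (I : countType) (F : I -> set T) :
  (forall i, M (F i)) -> M (\bigcap_i F i).
Proof.
move=> MF; rewrite -[X in M X]setCK setC_bigcap.
by apply/sigmaC/bigcup_count_sigma => i; apply/sigmaC.
Qed.

Lemma sigmaI_prop (P : Prop) A : M A -> M (A `&` [set _ | P]).
Proof.
move=> MA; have [p|np] := pselect P.
  by rewrite (_ : [set _ | P] = setT) ?setIT //; apply/seteqP; split.
by rewrite (_ : [set _ | P] = set0) ?setI0; [apply: sigma0|apply/seteqP; split].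
Qed.

End SigmaAlgebra.

Definition meas_fun {A B : Type} (mA : set (set A)) (mB : set (set B))
  (D : set A) (f : A -> B) := forall Y, mB Y -> mA (D `&` f @^-1` Y).

Section MeasFun.
Context {A B C : Type} (mA : set (set A)) (mB : set (set B)) (mC : set (set C)).
Hypothesis HA : sigma_algebra setT mA.

Lemma meas_fun_generated (G : set (set B)) D (f : A -> B) : mA D ->
  (forall Y, G Y -> mA (D `&` f @^-1` Y)) -> meas_fun mA <<s G >> D f.
Proof.
move=> mD mG Y GY; suff : [set Y | mA (D `&` f @^-1` Y)] Y by [].
apply: (smallest_sub _ _ GY) => //; split=> /=.
- by rewrite preimage_set0 setI0; apply: sigma0.
- move=> Z mZ; rewrite setTD preimage_setC -setDE.
  rewrite (_ : D `\` _ = D `\` (D `&` f @^-1` Z)); first exact: sigmaD.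
  by rewrite setDIr setDv set0U.
- by move=> F mF; rewrite preimage_bigcup setI_bigcupr; apply: bigcupT_sigma.
Qed.

Lemma meas_funS D D' (f : A -> B) :
  meas_fun mA mB D f -> mA D' -> D' `<=` D -> meas_fun mA mB D' f.
Proof.
move=> mf mD' D'D Y mY; rewrite (_ : _ `&` _ = D' `&` (D `&` f @^-1` Y)).
  by apply: sigmaI => //; apply: mf.
by rewrite setIA (setIidl D'D).
Qed.

Lemma meas_fun_comp D E (f : A -> B) (g : B -> C) :
  meas_fun mB mC E g -> meas_fun mA mB D f -> (forall x, D x -> E (f x)) ->
  meas_fun mA mC D (g \o f).
Proof.
move=> mg mf DE Y mY; rewrite (_ : _ `&` _ = D `&` f @^-1` (E `&` g @^-1` Y)).
  exact/mf/mg.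
by apply/seteqP; split=> x /= [Dx]; [split=> //; split=> //; apply: DE|case].
Qed.

End MeasFun.

Lemma open_local {T : topologicalType} (A : set T) :
  (forall x, A x -> exists B, [/\ open B, B x & B `<=` A]) -> open A.
Proof.
move=> loc; rewrite openE => x /loc[B [oB Bx BA]].
by apply: filterS BA _; apply: open_nbhs_nbhs.
Qed.

Lemma open_real_ball (A : set R) x : open A -> A x ->
  exists2 e : R, 0 < e & forall y, `|y - x| < e -> A y.
Proof.
rewrite openE => oA /oA /nbhs_ballP[e e0 eA]; exists e => // y yx.
by apply: eA; rewrite /ball /= distrC.
Qed.

Lemma open_ltlt (a b : R) : open [set x | a < x < b].
Proof. by rewrite (_ : [set x | _] = `]a, b[%classic) ?itv_open. Qed.

Lemma continuous_affine (a b : R) : continuous (fun s : R => a * s + b).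
Proof.
move=> s; apply: (@continuousD _ R^o) => /=; last exact: cst_continuous.
by apply: (@continuousM _ _ (cst a) id); [exact: cst_continuous|move=> ?].
Qed.

Definition clamp (s : R) : R := Num.min 1 (Num.max 0 s).

Lemma clamp_ge0 s : 0 <= clamp s.
Proof. by rewrite /clamp le_min ler01 le_max lexx. Qed.

Lemma clamp_le1 s : clamp s <= 1.
Proof. by rewrite /clamp ge_min lexx. Qed.

Lemma clamp_le0 s : s <= 0 -> clamp s = 0.
Proof. by move=> s0; rewrite /clamp (max_idPl s0) (min_idPr ler01). Qed.

Lemma clamp_ge1 s : 1 <= s -> clamp s = 1.
Proof. by move=> s1; rewrite /clamp (max_idPr (le_trans ler01 s1)) (min_idPl s1). Qed.

Lemma continuous_clamp : continuous clamp.
Proof.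
move=> s; apply: (@continuous_min R R (cst 1) (cst 0 \max id) s (@cst_continuous _ _ _ _)).
by apply: (@continuous_max R R (cst 0) id s (@cst_continuous _ _ _ _)) => ?.
Qed.

Lemma borel_sigma : sigma_algebra setT (@borel R).
Proof. exact: smallest_sigma_algebra. Qed.

Lemma borel_open (A : set R) : open A -> borel A.
Proof. exact: sub_gen_smallest. Qed.

Lemma borel_le (c : R) : borel [set x | x <= c].
Proof.
rewrite (_ : [set x | x <= c] = ~` [set x | c < x]).
  by apply: (sigmaC borel_sigma); apply: borel_open; apply: open_gt.
by apply/seteqP; split=> x /=; rewrite leNgt => /negP.
Qed.

Lemma borel_preimage (f : R -> R) C : continuous f -> borel C -> borel (f @^-1` C).
Proof.
move=> cf BC; rewrite -[f @^-1` C]setTI.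
apply: (meas_fun_generated borel_sigma) BC => [|Y oY].
  exact: (sigmaT borel_sigma).
by rewrite setTI; apply: borel_open; move/continuousP: cf; apply.
Qed.

Section RealMeasurability.
Context {T : Type} (M : set (set T)) (HM : sigma_algebra setT M).
Variable D : set T.
Hypothesis MD : M D.

Lemma meas_set_lt (u v : T -> R) : meas_fun M (@borel R) D u ->
  meas_fun M (@borel R) D v -> M (D `&` [set t | u t < v t]).
Proof.
move=> mu mv.
rewrite (_ : _ `&` _ = \bigcup_(q : rat) ((D `&` u @^-1` [set x | x < ratr q]) `&`
                                          (D `&` v @^-1` [set x | ratr q < x]))).
  apply: (bigcup_count_sigma HM) => q; apply: (sigmaI HM).
    by apply: mu; apply: borel_open; apply: open_lt.
  by apply: mv; apply: borel_open; apply: open_gt.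
apply/seteqP; split=> t /=.
  case=> Dt /rat_in_itvoo[q]; rewrite in_itv /= => /andP[uq qv].
  by exists q.
by case=> q _ [[Dt uq] [_ qv]]; split=> //; apply: lt_trans qv.
Qed.

Lemma meas_set_eq (u v : T -> R) : meas_fun M (@borel R) D u ->
  meas_fun M (@borel R) D v -> M (D `&` [set t | u t = v t]).
Proof.
move=> mu mv.
rewrite (_ : _ `&` _ = D `\` ((D `&` [set t | u t < v t]) `|` (D `&` [set t | v t < u t]))).
  by apply: (sigmaD HM) => //; apply: (sigmaU HM); apply: meas_set_lt.
apply/seteqP; split=> t /=.
  by case=> Dt ->; split=> //; rewrite ltxx => -[] [].
case=> Dt uv; split=> //; case: (ltgtP (u t) (v t)) => // ?; exfalso; apply: uv; by [left|right].
Qed.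

End RealMeasurability.

Section Euclidean.
Variable n : nat.
Implicit Types (a b c v x y : Rn n) (l r : R) (i : 'I_n).

Definition lerp (a b : Rn n) (l : R) : Rn n := \row_i ((1 - l) * a ord0 i + l * b ord0 i).
Definition sqdist (x y : Rn n) : R := \sum_(i < n) (x ord0 i - y ord0 i) ^+ 2.
Definition ratv (q : 'rV[rat]_n) : Rn n := \row_i ratr (q ord0 i).

Lemma lerpE a b l i : lerp a b l ord0 i = (1 - l) * a ord0 i + l * b ord0 i.
Proof. by rewrite mxE. Qed.

Lemma lerp0 a b : lerp a b 0 = a.
Proof. by apply/matrixP => i j; rewrite (ord1 i) lerpE subr0 mul1r mul0r addr0. Qed.

Lemma lerp1 a b : lerp a b 1 = b.
Proof. by apply/matrixP => i j; rewrite (ord1 i) lerpE subrr mul1r mul0r add0r. Qed.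

Lemma sqdist_ge0 x y : 0 <= sqdist x y.
Proof. by apply: sumr_ge0 => i _; apply: sqr_ge0. Qed.

Lemma sqr_coord_le_sqdist x y i : (x ord0 i - y ord0 i) ^+ 2 <= sqdist x y.
Proof. by rewrite /sqdist (bigD1 i) //= lerDl; apply: sumr_ge0 => j _; apply: sqr_ge0. Qed.

Lemma eball_convex c r a b l : eball c r a -> eball c r b -> 0 <= l -> l <= 1 ->
  eball c r (lerp a b l).
Proof.
rewrite /eball /= -/(sqdist a c) -/(sqdist b c) -/(sqdist _ c) => ac bc l0 l1.
apply: (@le_lt_trans _ _ ((1 - l) * sqdist a c + l * sqdist b c)).
  rewrite /sqdist !mulr_sumr -big_split /=; apply: ler_sum => i _; rewrite lerpE.
  have : 0 <= l * (1 - l) * (a ord0 i - b ord0 i) ^+ 2.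
    by apply: mulr_ge0; [nra|apply: sqr_ge0].
  nra.
have [l_lt1|l_ge1] := ltP l 1; last first.
  have -> : l = 1 by lra.
  by rewrite subrr mul0r add0r mul1r.
have : 0 < (1 - l) * (r ^+ 2 - sqdist a c) by apply: mulr_gt0; lra.
have : 0 <= l * (r ^+ 2 - sqdist b c) by apply: mulr_ge0; lra.
nra.
Qed.

Lemma borelRn_sigma : sigma_algebra setT (@borelRn n).
Proof. exact: smallest_sigma_algebra. Qed.

Lemma eopen_coord i (C : set R) : open C -> eopen [set x : Rn n | C (x ord0 i)].
Proof.
move=> oC x /= /(open_real_ball oC)[e e0 eC]; exists e => // y yx /=; apply: eC.
have := le_lt_trans (sqr_coord_le_sqdist y x i) yx.
rewrite ltr_norml; set d := _ - _ => ?; apply/andP; split; nra.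
Qed.

Lemma borelRn_coord i (C : set R) : borel C -> borelRn [set x : Rn n | C (x ord0 i)].
Proof.
move=> BC; rewrite -[X in borelRn X]setTI.
apply: (meas_fun_generated borelRn_sigma (f := fun x : Rn n => x ord0 i)) BC.
  exact: (sigmaT borelRn_sigma).
by move=> Y oY; rewrite setTI; apply: sub_gen_smallest; apply: eopen_coord.
Qed.

Lemma mul_sqr_div_lt (c e K : R) : 0 < e -> 1 <= K -> c < K -> c * (e / K) ^+ 2 < e ^+ 2.
Proof.
move=> e0 K1 cK; have K0 : 0 < K by lra.
rewrite expr_div_n mulrA ltr_pdivrMr ?exprn_gt0 //.
have e2 : 0 < e ^+ 2 by apply: exprn_gt0.
have : c * e ^+ 2 < K * e ^+ 2 by rewrite ltr_pM2r.
have : K * e ^+ 2 <= K ^+ 2 * e ^+ 2 by rewrite ler_pM2r // expr2; nra.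
lra.
Qed.

Lemma ratbox_around v (d : R) : 0 < d ->
  exists lo hi : 'rV[rat]_n, forall i,
    [/\ v ord0 i - d < ratr (lo ord0 i), ratr (lo ord0 i) < v ord0 i,
        v ord0 i < ratr (hi ord0 i) & ratr (hi ord0 i) < v ord0 i + d].
Proof.
move=> d0.
have below (i : 'I_n) : exists q : rat, v ord0 i - d < ratr q < v ord0 i.
  by have [|q] := @rat_in_itvoo _ (v ord0 i - d) (v ord0 i); [lra|rewrite in_itv; exists q].
have above (i : 'I_n) : exists q : rat, v ord0 i < ratr q < v ord0 i + d.
  by have [|q] := @rat_in_itvoo _ (v ord0 i) (v ord0 i + d); [lra|rewrite in_itv; exists q].
have [flo lo_spec] := boolp.choice below; have [fhi hi_spec] := boolp.choice above.
exists (\row_i flo i), (\row_i fhi i) => i; rewrite !mxE.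
by case/andP: (lo_spec i) => ? ?; case/andP: (hi_spec i) => ? ?.
Qed.

Lemma ratv_dense v (e : R) : 0 < e -> exists q, sqdist (ratv q) v < e ^+ 2.
Proof.
move=> e0; set d := e / (n%:R + 1).
have d0 : 0 < d by rewrite divr_gt0 // ltr_wpDl.
have [lo [hi near_v]] := ratbox_around v d0; exists lo.
apply: (@le_lt_trans _ _ (\sum_(i < n) d ^+ 2)).
  by apply: ler_sum => i _; rewrite mxE; have [] := near_v i; nra.
rewrite sumr_const card_ord -[_ *+ n]mulr_natl.
by apply: mul_sqr_div_lt => //; [rewrite lerDr|rewrite ltrDl].
Qed.

Definition in_ratbox a (lo hi : 'rV[rat]_n) :=
  forall i, ratr (lo ord0 i) < a ord0 i /\ a ord0 i < ratr (hi ord0 i).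

Definition lerp_ratbox_sub (W : set (Rn n)) (alo ahi blo bhi : 'rV[rat]_n) (llo lhi : rat) :=
  forall a b l, 0 <= l -> l <= 1 -> in_ratbox a alo ahi -> in_ratbox b blo bhi ->
    ratr llo < l -> l < ratr lhi -> W (lerp a b l).

Lemma lerp_coord_sqr_le (a b a' b' l l' d : R) : 0 <= l' -> l' <= 1 ->
  (a' - a) ^+ 2 <= d ^+ 2 -> (b' - b) ^+ 2 <= d ^+ 2 -> (l' - l) ^+ 2 <= d ^+ 2 ->
  ((1 - l') * a' + l' * b' - ((1 - l) * a + l * b)) ^+ 2 <=
    3 * (d ^+ 2 * (2 + (b - a) ^+ 2)).
Proof.
move=> l0 l1 da db dl.
set x := a' - a; set y := b' - b; set z := l' - l; set w := b - a.
have -> : (1 - l') * a' + l' * b' - ((1 - l) * a + l * b) = (1 - l') * x + l' * y + z * w.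
  by rewrite /x /y /z /w; ring.
have tx : ((1 - l') * x) ^+ 2 <= d ^+ 2.
  by rewrite exprMn -[leRHS]mul1r; apply: ler_pM; rewrite ?sqr_ge0 //; nra.
have ty : (l' * y) ^+ 2 <= d ^+ 2.
  by rewrite exprMn -[leRHS]mul1r; apply: ler_pM; rewrite ?sqr_ge0 //; nra.
have tz : (z * w) ^+ 2 <= d ^+ 2 * w ^+ 2 by rewrite exprMn; apply: ler_pM; rewrite ?sqr_ge0.
have sum3 (p q r : R) : (p + q + r) ^+ 2 <= 3 * (p ^+ 2 + q ^+ 2 + r ^+ 2).
  have := sqr_ge0 (p - q); have := sqr_ge0 (q - r); have := sqr_ge0 (p - r).
  rewrite !expr2 => *; nra.
by apply: le_trans (sum3 _ _ _) _; nra.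
Qed.

Lemma lerp_ratbox_nbhs W a b l : eopen W -> 0 <= l -> l <= 1 -> W (lerp a b l) ->
  exists alo ahi blo bhi llo lhi,
    [/\ in_ratbox a alo ahi, in_ratbox b blo bhi, ratr llo < l < ratr lhi &
        lerp_ratbox_sub W alo ahi blo bhi llo lhi].
Proof.
move=> oW l0 l1 /oW[e e0 eW].
set M := sqdist b a; set K := 3 * (n%:R + 1) * (2 + M).
have M0 : 0 <= M by apply: sqdist_ge0.
have K1 : 1 <= K by have := ler0n R n; rewrite /K; nra.
set d := e / K; have d0 : 0 < d by rewrite divr_gt0 //; lra.
have [alo [ahi near_a]] := ratbox_around a d0.
have [blo [bhi near_b]] := ratbox_around b d0.
have [|llo] := @rat_in_itvoo _ (l - d) l; first lra.
rewrite in_itv /= => /andP[llo_d llo_l].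
have [|lhi] := @rat_in_itvoo _ l (l + d); first lra.
rewrite in_itv /= => /andP[l_lhi lhi_d].
exists alo, ahi, blo, bhi, llo, lhi; split.
- by move=> i; have [] := near_a i.
- by move=> i; have [] := near_b i.
- by rewrite llo_l l_lhi.
move=> a' b' l' l'0 l'1 a'_in b'_in llo_l' l'_lhi; apply: eW.
rewrite /eball /= -/(sqdist _ _).
apply: (@le_lt_trans _ _ (\sum_(i < n) 3 * (d ^+ 2 * (2 + M)))).
  apply: ler_sum => i _; rewrite !lerpE.
  have [? ? ? ?] := near_a i; have [? ? ? ?] := near_b i.
  have [? ?] := a'_in i; have [? ?] := b'_in i.
  have ba := sqr_coord_le_sqdist b a i.
  apply: (le_trans (@lerp_coord_sqr_le _ _ _ _ _ _ d l'0 l'1 _ _ _)); try nra.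
  by rewrite ler_pM2l // ler_pM2l ?exprn_gt0 // lerD2l.
rewrite sumr_const card_ord -[_ *+ n]mulr_natl.
have -> : n%:R * (3 * (d ^+ 2 * (2 + M))) = n%:R * 3 * (2 + M) * (e / K) ^+ 2.
  by rewrite /d; ring.
by apply: mul_sqr_div_lt => //; have := ler0n R n; rewrite /K; nra.
Qed.

End Euclidean.

Lemma EDmeas_sigma {n : nat} : sigma_algebra setT (@EDmeas n).
Proof. exact: smallest_sigma_algebra. Qed.

Definition chart (X : Type) (n : nat) := (set X * (X -> Rn n * R))%type.

Section Charts.
Variables (X : topologicalType) (measX : set (set X)) (n : nat) (x0 : X).
Hypothesis HX : sigma_algebra setT measX.
Implicit Types (c : chart X n) (x : X) (z : Rn n * R).

Definition chart_range c : set (Rn n * R) := c.2 @` c.1.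

(* [x0] is the junk value of [chart_inv c] outside the range of [c]. *)
Definition chart_inv c : Rn n * R -> X := 'pinv_(fun=> x0) c.1 c.2.

Lemma chart_range_map c x : c.1 x -> chart_range c (c.2 x).
Proof. by exists x. Qed.

Section OneChart.
Variable c : chart X n.
Hypothesis Hc : MT_chart measX c.1 c.2.

Lemma chart_rangeE : exists cc r S, [/\ 0 < r, borel S, chart_range c = eball cc r `*` S &
  MT_iso measX (@EDopen n) (@EDmeas n) c.1 (eball cc r `*` S) c.2].
Proof.
case: Hc => _ _ [cc [r [S [r0 BS iso]]]]; exists cc, r, S; split => //.
by case: iso => -[cA _ surj] _ _; apply/seteqP; split=> [_ [x ? <-]|z /surj[x ? <-]];
  [apply: cA|exists x].
Qed.

Lemma chart_open : open c.1. Proof. by case: Hc. Qed.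

Lemma chart_meas : measX c.1. Proof. by case: Hc. Qed.

Lemma chart_invK x : c.1 x -> chart_inv c (c.2 x) = x.
Proof.
move=> cx; have [_ [_ [_ [_ _ _ [[_ inj _] _ _]]]]] := chart_rangeE.
have inj_in : {in c.1 &, injective c.2} := inj.
by apply: (pinvKV (fun=> x0) inj_in); rewrite inE.
Qed.

Lemma chart_MT_open W : W `<=` chart_range c -> EDopen W <-> open (c.1 `&` c.2 @^-1` W).
Proof. by have [cc [r [S [_ _ -> [_ MTo _]]]]] := chart_rangeE; exact: MTo. Qed.

Lemma chart_MT_meas W : W `<=` chart_range c -> EDmeas W <-> measX (c.1 `&` c.2 @^-1` W).
Proof. by have [cc [r [S [_ _ -> [_ _ MTm]]]]] := chart_rangeE; exact: MTm. Qed.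

Lemma preimage_chart_range : c.1 `&` c.2 @^-1` chart_range c = c.1.
Proof. by apply/setIidl => x; apply: chart_range_map. Qed.

Lemma chart_range_meas : EDmeas (chart_range c).
Proof. by apply/chart_MT_meas => //; rewrite preimage_chart_range; exact: chart_meas. Qed.

Lemma chart_range_open : EDopen (chart_range c).
Proof. by apply/chart_MT_open => //; rewrite preimage_chart_range; exact: chart_open. Qed.

Lemma meas_fun_chart : meas_fun measX (@EDmeas n) c.1 c.2.
Proof.
move=> W mW; rewrite (_ : _ `&` _ = c.1 `&` c.2 @^-1` (W `&` chart_range c)).
  apply/chart_MT_meas; first exact: subIsetr.
  by apply: (sigmaI EDmeas_sigma) => //; exact: chart_range_meas.
apply/seteqP; split=> x /= [cx]; last by case.
by move=> Wx; split=> //; split=> //; apply: chart_range_map.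
Qed.

Definition chart_image (B : set X) : set (Rn n * R) :=
  [set z | chart_range c z /\ B (chart_inv c z)].

Lemma preimage_chart_image B : c.1 `&` c.2 @^-1` chart_image B = c.1 `&` B.
Proof.
apply/seteqP; split=> x /= [cx].
  by move=> [_]; rewrite chart_invK.
by move=> Bx; split=> //; split; [apply: chart_range_map|rewrite chart_invK].
Qed.

Lemma chart_image_meas B : measX B -> EDmeas (chart_image B).
Proof.
move=> mB; apply/chart_MT_meas; first by move=> z [].
by rewrite preimage_chart_image; apply: (sigmaI HX) => //; exact: chart_meas.
Qed.

Lemma chart_image_open B : open B -> EDopen (chart_image B).
Proof.
move=> oB; apply/chart_MT_open; first by move=> z [].
by rewrite preimage_chart_image; apply: openI => //; exact: chart_open.
Qed.

Lemma open_plaque (s : R) : open [set x | c.1 x /\ (c.2 x).2 = s].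
Proof.
rewrite (_ : [set x | _] = c.1 `&` c.2 @^-1` [set z | chart_range c z /\ z.2 = s]).
  apply/chart_MT_open; first by move=> z [].
  move=> t; have [<-{t}|ts] := pselect (s = t); last by move=> x [_ /esym /ts].
  rewrite (_ : [set x | _] = [set x | chart_range c (x, s)]).
    exact: chart_range_open.
  by apply/seteqP; split=> x /=; [case|split].
by apply/seteqP; split=> x /= [cx]; [split=> //; split=> //; apply: chart_range_map|case].
Qed.

Lemma chart_range_lerp v w s l : chart_range c (v, s) -> chart_range c (w, s) ->
  0 <= l -> l <= 1 -> chart_range c (lerp v w l, s).
Proof.
have [cc [r [S [_ _ -> _]]]] := chart_rangeE.
by move=> [/= cv Ss] [/= cw _] l0 l1; split=> //=; apply: eball_convex.
Qed.

End OneChart.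
End Charts.

Section Concat.
Variable X : topologicalType.
Implicit Types f g : R -> X.

Definition path_concat f g (s : R) : X :=
  if s <= 2^-1 then f (2 * s) else g (2 * s - 1).

Lemma path_concat0 f g : path_concat f g 0 = f 0.
Proof. by rewrite /path_concat invr_ge0 ler0n mulr0. Qed.

Lemma path_concat1 f g : path_concat f g 1 = g 1.
Proof.
rewrite /path_concat ifF; first by congr g; lra.
by apply/negbTE; rewrite -ltNge invf_lt1 ?ltr0n //; lra.
Qed.

Lemma continuous_path_concat f g : continuous f -> continuous g -> f 1 = g 0 ->
  continuous (path_concat f g).
Proof.
move=> /continuousP cf /continuousP cg fg; apply/continuousP => O oO.
set Pf := (fun s : R => 2 * s + 0) @^-1` (f @^-1` O).
set Pg := (fun s : R => 2 * s - 1) @^-1` (g @^-1` O).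
have oPf : open Pf by move/continuousP: (@continuous_affine 2 0); apply; apply: cf.
have oPg : open Pg by move/continuousP: (@continuous_affine 2 (-1)); apply; apply: cg.
rewrite (_ : _ @^-1` O =
   ([set s | s < 2^-1] `&` Pf) `|` ([set s | 2^-1 < s] `&` Pg) `|` (Pf `&` Pg)).
  apply: openU; first apply: openU.
  - by apply: openI => //; exact: open_lt.
  - by apply: openI => //; exact: open_gt.
  - exact: openI.
apply/seteqP; split=> s; rewrite /path_concat /Pf /Pg /= addr0.
  case: ltgtP => [_|_|->] /= Os; [by left; left|by left; right|].
  by right; rewrite divff // in Os *; rewrite subrr -fg.
case: ifP => hs [[[lt ?]|[lt ?]]|[? ?]] //.
  by move: hs; rewrite leNgt lt.
by move: hs; rewrite le_eqVlt lt orbT.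
Qed.

End Concat.

Section PlaqueSegment.
Variables (X : topologicalType) (measX : set (set X)) (n : nat) (x0 : X).
Variable c : chart X n.
Hypothesis Hc : MT_chart measX c.1 c.2.
Implicit Types (x : X) (y : Rn n).

(* Parametrized by [clamp s], so that it is defined and constant outside [0, 1]. *)
Definition plaque_segment x y (s : R) : X :=
  chart_inv x0 c (lerp (c.2 x).1 y (clamp s), (c.2 x).2).

Lemma plaque_segment_range x y s : c.1 x -> chart_range c (y, (c.2 x).2) ->
  chart_range c (lerp (c.2 x).1 y (clamp s), (c.2 x).2).
Proof.
move=> cx cy; apply: (chart_range_lerp Hc) => //; rewrite ?clamp_ge0 ?clamp_le1 //.
by rewrite -surjective_pairing; apply: chart_range_map.
Qed.

Lemma plaque_segment0 x y : c.1 x -> plaque_segment x y 0 = x.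
Proof.
by move=> cx; rewrite /plaque_segment clamp_le0 // lerp0 -surjective_pairing (chart_invK x0 Hc).
Qed.

Lemma plaque_segment1 x y : plaque_segment x y 1 = chart_inv x0 c (y, (c.2 x).2).
Proof. by rewrite /plaque_segment clamp_ge1 // lerp1. Qed.

Lemma continuous_plaque_segment x y : c.1 x -> chart_range c (y, (c.2 x).2) ->
  continuous (plaque_segment x y).
Proof.
move=> cx cy; apply/continuousP => O oO; apply: open_local => s Os.
set V := [set v | chart_image x0 c O (v, (c.2 x).2)].
have oV : eopen V by move=> v; apply: (chart_image_open Hc oO).
have /(lerp_ratbox_nbhs oV (clamp_ge0 s) (clamp_le1 s))
  [alo [ahi [blo [bhi [llo [lhi [a_in b_in ls sub]]]]]]] :
    V (lerp (c.2 x).1 y (clamp s)) by split=> //; apply: plaque_segment_range.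
exists (clamp @^-1` [set l | ratr llo < l < ratr lhi]); split => //.
  by move/continuousP: continuous_clamp; apply; apply: open_ltlt.
by move=> u /= /andP[? ?]; have [] := sub _ _ _ (clamp_ge0 u) (clamp_le1 u) a_in b_in.
Qed.

End PlaqueSegment.

Section JointMeasurability.
Variables (X : topologicalType) (measX : set (set X)) (n : nat) (x0 : X).
Hypothesis HX : sigma_algebra setT measX.
Local Notation XR := (XRmeas measX).

Lemma XRmeas_sigma : sigma_algebra setT XR.
Proof. exact: smallest_sigma_algebra. Qed.

Lemma XRmeas_rect A C : measX A -> borel C -> XR (A `*` C).
Proof. by move=> mA BC; apply: sub_gen_smallest; exists A => //; exists C. Qed.

Lemma XRmeas_strip A : measX A -> XR (A `*` setT).
Proof. by move=> mA; apply: XRmeas_rect => //; exact: (sigmaT borel_sigma). Qed.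

Lemma EDmeas_rect (A : set (Rn n)) C : borelRn A -> borel C -> EDmeas (A `*` C).
Proof. by move=> BA BC; apply: sub_gen_smallest; exists A => //; exists C. Qed.

Lemma XRmeas_affine (a b : R) E : XR E -> XR [set p | E (p.1, a * p.2 + b)].
Proof.
move=> mE; rewrite -[X in XR X]setTI.
apply: (meas_fun_generated XRmeas_sigma (f := fun p : X * R => (p.1, a * p.2 + b))) mE.
  exact: (sigmaT XRmeas_sigma).
move=> _ [A mA [C BC <-]]; rewrite setTI.
rewrite (_ : _ @^-1` _ = A `*` ((fun s => a * s + b) @^-1` C)) //.
by apply: XRmeas_rect => //; apply: borel_preimage BC; exact: continuous_affine.
Qed.

Lemma meas_fun_coord i : meas_fun (@EDmeas n) (@borel R) setT (fun z : Rn n * R => z.1 ord0 i).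
Proof.
move=> C BC; rewrite setTI (_ : _ @^-1` _ = [set x : Rn n | C (x ord0 i)] `*` setT).
  by apply: EDmeas_rect; [exact: borelRn_coord|exact: (sigmaT borel_sigma)].
by apply/seteqP; split=> z //= [].
Qed.

Lemma meas_fun_snd : meas_fun (@EDmeas n) (@borel R) setT (fun z : Rn n * R => z.2).
Proof.
move=> C BC; rewrite setTI (_ : _ @^-1` _ = setT `*` C).
  by apply: EDmeas_rect => //; exact: (sigmaT (@borelRn_sigma n)).
by apply/seteqP; split=> z //= [].
Qed.

Definition meas_coords (D : set X) (a : X -> Rn n) :=
  forall i, meas_fun measX (@borel R) D (fun t => a t ord0 i).

Section ChartCoordinates.
Variables (c : chart X n) (D : set X) (f : X -> X).
Hypotheses (Hc : MT_chart measX c.1 c.2) (mf : meas_fun measX measX D f).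
Hypothesis fD : forall t, D t -> c.1 (f t).

Lemma meas_coords_chart : meas_coords D (fun t => (c.2 (f t)).1).
Proof.
move=> i; apply: (meas_fun_comp (meas_fun_coord i) _ (fun _ _ => I)).
exact: (meas_fun_comp (meas_fun_chart Hc) mf fD).
Qed.

Lemma meas_fun_transversal_coord : meas_fun measX (@borel R) D (fun t => (c.2 (f t)).2).
Proof.
apply: (meas_fun_comp meas_fun_snd _ (fun _ _ => I)).
exact: (meas_fun_comp (meas_fun_chart Hc) mf fD).
Qed.

End ChartCoordinates.

Lemma meas_in_ratbox D (a : X -> Rn n) lo hi : measX D -> meas_coords D a ->
  measX [set t | D t /\ in_ratbox (a t) lo hi].
Proof.
move=> mD ma; rewrite (_ : [set t | _] = D `&` \bigcap_i (D `&` (fun t => a t ord0 i) @^-1`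
    [set x | ratr (lo ord0 i) < x < ratr (hi ord0 i)])).
  apply: (sigmaI HX) => //; apply: (bigcap_count_sigma HX) => i.
  by apply: ma; apply: borel_open; exact: open_ltlt.
apply/seteqP; split=> t /= [Dt ta]; split=> //.
  by move=> i _; split=> //; have [? ?] := ta i; apply/andP.
by move=> i; have [_ /andP[]] := ta i I.
Qed.

Section Interpolation.
Variables (D : set X) (a b : X -> Rn n).
Hypotheses (mD : measX D) (ma : meas_coords D a) (mb : meas_coords D b).
Local Notation interp p := (lerp (a p.1) (b p.1) (clamp p.2)).

(* The preimage of an open set is the countable union, over rational boxes
   mapped into it, of measurable rectangles. *)
Lemma XRmeas_lerp_open W : eopen W -> XR ((D `*` setT) `&` [set p | W (interp p)]).
Proof.
move=> oW.
pose box (d : 'rV[rat]_n * 'rV[rat]_n * 'rV[rat]_n * 'rV[rat]_n * rat * rat) :=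
  let: (alo, ahi, blo, bhi, llo, lhi) := d in
  (([set t | D t /\ in_ratbox (a t) alo ahi] `&` [set t | D t /\ in_ratbox (b t) blo bhi])
     `*` (clamp @^-1` [set l | ratr llo < l < ratr lhi]))
  `&` [set _ | lerp_ratbox_sub W alo ahi blo bhi llo lhi].
rewrite (_ : _ `&` _ = \bigcup_d box d).
  apply: (bigcup_count_sigma XRmeas_sigma) => -[[[[[alo ahi] blo] bhi] llo] lhi] /=.
  apply: (sigmaI_prop XRmeas_sigma); apply: XRmeas_rect.
    by apply: (sigmaI HX); [exact: meas_in_ratbox mD ma|exact: meas_in_ratbox mD mb].
  by apply: borel_preimage; [exact: continuous_clamp|apply: borel_open; exact: open_ltlt].
apply/seteqP; split=> -[t s] /=.
  move=> [[Dt _] /(lerp_ratbox_nbhs oW (clamp_ge0 s) (clamp_le1 s))].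
  by move=> [alo [ahi [blo [bhi [llo [lhi [? ? ? ?]]]]]]]; exists (alo, ahi, blo, bhi, llo, lhi).
move=> [[[[[[alo ahi] blo] bhi] llo] lhi] _ /= [[[[Dt a_in] [_ b_in]] /andP[? ?]] sub]].
by split=> //; apply: sub => //; [exact: clamp_ge0|exact: clamp_le1].
Qed.

Lemma XRmeas_lerp (u : X -> R) W : meas_fun measX (@borel R) D u -> EDmeas W ->
  XR ((D `*` setT) `&` [set p | W (interp p, u p.1)]).
Proof.
move=> mu mW.
apply: (meas_fun_generated XRmeas_sigma (f := fun p => (interp p, u p.1))) mW.
  exact: XRmeas_strip.
move=> _ [A BA [C BC <-]].
rewrite (_ : _ `&` _ = ((D `*` setT) `&` [set p | A (interp p)]) `&` ((D `&` u @^-1` C) `*` setT)).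
  apply: (sigmaI XRmeas_sigma); last by apply: XRmeas_strip; apply: mu.
  apply: (meas_fun_generated XRmeas_sigma (f := fun p => interp p)) BA.
    exact: XRmeas_strip.
  exact: XRmeas_lerp_open.
by apply/seteqP; split=> -[t s] /=; [move=> [[Dt _] [? ?]]|move=> [[[Dt _] ?] [[_ ?] _]]].
Qed.

End Interpolation.

Lemma XRmeas_plaque_segment (c : chart X n) (D : set X) (f : X -> X) (y : X -> Rn n) B :
  MT_chart measX c.1 c.2 -> measX D -> meas_fun measX measX D f ->
  (forall t, D t -> c.1 (f t)) -> meas_coords D y ->
  (forall t, D t -> chart_range c (y t, (c.2 (f t)).2)) -> measX B ->
  XR ((D `*` setT) `&` [set p | B (plaque_segment x0 c (f p.1) (y p.1) p.2)]).
Proof.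
move=> Hc mD mf fD my yD mB.
rewrite (_ : _ `&` _ = (D `*` setT) `&` [set p | chart_image x0 c B
     (lerp (c.2 (f p.1)).1 (y p.1) (clamp p.2), (c.2 (f p.1)).2)]).
  apply: (XRmeas_lerp mD (meas_coords_chart Hc mf fD) my (meas_fun_transversal_coord Hc mf fD)).
  exact: (chart_image_meas x0 HX Hc mB).
apply/seteqP; split=> -[t s] /= [[Dt _]]; last by move=> [].
by move=> Bs; split=> //; split=> //; apply: plaque_segment_range; [exact: Hc|apply: fD|apply: yD].
Qed.

Lemma XRmeas_path_concat (D : set X) (F G : X -> R -> X) B :
  XR ((D `*` setT) `&` [set p | B (F p.1 p.2)]) ->
  XR ((D `*` setT) `&` [set p | B (G p.1 p.2)]) ->
  XR ((D `*` setT) `&` [set p | B (path_concat (F p.1) (G p.1) p.2)]).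
Proof.
move=> mF mG.
rewrite (_ : _ `&` _ =
  ((setT `*` [set s | s <= 2^-1]) `&`
     [set p | ((D `*` setT) `&` [set p | B (F p.1 p.2)]) (p.1, 2 * p.2 + 0)]) `|`
  ((setT `*` ~` [set s | s <= 2^-1]) `&`
     [set p | ((D `*` setT) `&` [set p | B (G p.1 p.2)]) (p.1, 2 * p.2 + -1)])).
  apply: (sigmaU XRmeas_sigma); apply: (sigmaI XRmeas_sigma); try exact: XRmeas_affine.
    by apply: XRmeas_rect; [exact: (sigmaT HX)|exact: borel_le].
  by apply: XRmeas_rect; [exact: (sigmaT HX)|apply: (sigmaC borel_sigma); exact: borel_le].
apply/seteqP; split=> -[t s] /=; rewrite /path_concat addr0.
  by case: ifP => s_le [[Dt _] Bs]; [left|right]; do !split.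
case=> -[[_ s_le] [[Dt _] Bs]]; split=> //; first by rewrite s_le.
by rewrite ifF //; apply/negP.
Qed.

End JointMeasurability.

Section RationalChains.
Variables (X : topologicalType) (measX : set (set X)) (n : nat) (x0 : X).
Hypothesis HX : sigma_algebra setT measX.
Variable At : set (chart X n).
Hypothesis HAt : forall c, At c -> MT_chart measX c.1 c.2.
Variable e : nat -> chart X n.
Local Notation XR := (XRmeas measX).
Local Notation transv k x := (((e k).2 x).2).
Local Notation link := (nat * 'rV[rat]_n)%type.

Definition plaque_point k (q : 'rV[rat]_n) (x : X) : X :=
  chart_inv x0 (e k) (ratv q, transv k x).

(* Each link [(k, q)] moves along the plaque of chart [e k] to the point with
   rational ball coordinate [q]; the chain ends in the plaque of [z] in [e m]. *)
Fixpoint rat_chain (l : seq link) (m : nat) (x z : X) : Prop :=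
  match l with
  | [::] => [/\ At (e m), (e m).1 x, (e m).1 z & transv m z = transv m x]
  | (k, q) :: l' => [/\ At (e k), (e k).1 x, chart_range (e k) (ratv q, transv k x) &
                      rat_chain l' m (plaque_point k q x) z]
  end.

Fixpoint chain_path (l : seq link) (m : nat) (x z : X) : R -> X :=
  match l with
  | [::] => plaque_segment x0 (e m) x ((e m).2 z).1
  | (k, q) :: l' => path_concat (plaque_segment x0 (e k) x (ratv q))
                                (chain_path l' m (plaque_point k q x) z)
  end.

Lemma chain_path0 l m x z : rat_chain l m x z -> chain_path l m x z 0 = x.
Proof.
case: l => [|[k q] l] /= [Ak ex _ _]; last rewrite path_concat0;
  exact: (plaque_segment0 x0 (HAt Ak)).
Qed.

Lemma chain_path1 l m x z : rat_chain l m x z -> chain_path l m x z 1 = z.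
Proof.
elim: l x => [|[k q] l IH] x /= [Ak ex]; last by move=> _ /IH; rewrite path_concat1.
by move=> ez zx; rewrite plaque_segment1 -zx -surjective_pairing (chart_invK x0 (HAt Ak)).
Qed.

Lemma continuous_chain_path l m x z : rat_chain l m x z -> continuous (chain_path l m x z).
Proof.
elim: l x => [|[k q] l IH] x /= [Ak ex].
  move=> ez zx; apply: (continuous_plaque_segment (HAt Ak)) => //.
  by rewrite -zx -surjective_pairing; apply: chart_range_map.
move=> eq chain; apply: continuous_path_concat.
- exact: (continuous_plaque_segment (HAt Ak)).
- exact: IH.
- by rewrite plaque_segment1 (chain_path0 chain).
Qed.

Lemma rat_chain_last l m x z : rat_chain l m x z -> At (e m) /\ (e m).1 z.
Proof. by elim: l x => [|[k q] l IH] x /=; [case|case=> _ _ _ /IH]. Qed.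

Lemma rat_chain_plaque l m x z z' : rat_chain l m x z -> (e m).1 z' ->
  transv m z' = transv m z -> rat_chain l m x z'.
Proof.
elim: l x => [|[k q] l IH] x /= [Ak ex]; first by move=> ez zx ez' ->.
by move=> eq chain ez' z'z; split=> //; apply: IH.
Qed.

Lemma rat_chain_rcons l m k q x y z : rat_chain l m x y ->
  chart_range (e m) (ratv q, transv m y) ->
  rat_chain [::] k (chart_inv x0 (e m) (ratv q, transv m y)) z ->
  rat_chain (rcons l (m, q)) k x z.
Proof.
elim: l x => [|[k' q'] l IH] x /= [Ak ex].
  by move=> ey yx; rewrite yx.
by move=> eq chain range last; split=> //; apply: IH.
Qed.

Lemma meas_fun_chart_inv c : MT_chart measX c.1 c.2 ->
  meas_fun (@EDmeas n) measX (chart_range c) (chart_inv x0 c).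
Proof. by move=> Hc B mB; apply: (chart_image_meas x0 HX Hc mB). Qed.

Lemma meas_fun_pair D (v : Rn n) (u : X -> R) : measX D -> meas_fun measX (@borel R) D u ->
  meas_fun measX (@EDmeas n) D (fun t => (v, u t)).
Proof.
move=> mD mu; apply: meas_fun_generated => // _ [A _ [C BC <-]].
have [Av|nAv] := pselect (A v).
  rewrite (_ : _ `&` _ = D `&` u @^-1` C); first exact: mu.
  by apply/seteqP; split=> t /= [Dt]; [case|split].
by rewrite (_ : _ `&` _ = set0); [apply: (sigma0 HX)|apply/seteqP; split=> t // [_ []]].
Qed.

Lemma meas_coords_cst D (v : Rn n) : measX D -> meas_coords measX D (fun=> v).
Proof.
move=> mD i C BC; have [Cv|nCv] := pselect (C (v ord0 i)).
  by rewrite (_ : _ `&` _ = D) //; apply/seteqP; split=> t //= [].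
by rewrite (_ : _ `&` _ = set0); [apply: (sigma0 HX)|apply/seteqP; split=> t //= []].
Qed.

Section Links.
Variables (D : set X) (f : X -> X) (k : nat) (q : 'rV[rat]_n).
Hypotheses (mf : meas_fun measX measX D f) (Ak : At (e k)).

Definition link_dom : set X :=
  D `&` [set t | (e k).1 (f t) /\ chart_range (e k) (ratv q, transv k (f t))].

Let Hc := HAt Ak.

Lemma link_dom_sub : link_dom `<=` D.
Proof. by move=> t []. Qed.

Lemma chart_dom_meas : measX (D `&` f @^-1` (e k).1).
Proof. exact/mf/(chart_meas Hc). Qed.

Lemma link_dom_meas : measX link_dom.
Proof.
have mf1 := meas_funS HX mf chart_dom_meas (@subIsetl _ _ _).
have := meas_fun_transversal_coord Hc mf1 (fun t (dt : (D `&` _) t) => dt.2).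
move=> /(meas_fun_pair (ratv q) chart_dom_meas) /(_ _ (chart_range_meas Hc)); congr measX.
by rewrite -setIA; congr (_ `&` _); apply/seteqP; split=> t [].
Qed.

Lemma meas_fun_plaque_point : meas_fun measX measX link_dom (fun t => plaque_point k q (f t)).
Proof.
have mf1 := meas_funS HX mf link_dom_meas link_dom_sub.
have tr := meas_fun_transversal_coord Hc mf1 (fun t (dt : link_dom t) => dt.2.1).
exact: (meas_fun_comp (meas_fun_chart_inv Hc) (meas_fun_pair _ link_dom_meas tr)
  (fun t (dt : link_dom t) => dt.2.2)).
Qed.

End Links.

Lemma rat_chain_nil_meas m D (f g : X -> X) : measX D -> meas_fun measX measX D f ->
  meas_fun measX measX D g -> measX (D `&` [set t | rat_chain [::] m (f t) (g t)]).
Proof.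
move=> mD mf mg; have [Am|nAm] := pselect (At (e m)); last first.
  by rewrite (_ : _ `&` _ = set0); [apply: (sigma0 HX)|apply/seteqP; split=> t // [_ []]].
have Hc := HAt Am; set D1 := (D `&` f @^-1` (e m).1) `&` (D `&` g @^-1` (e m).1).
have mD1 : measX D1.
  by apply: (sigmaI HX); [exact: chart_dom_meas mf Am|exact: chart_dom_meas mg Am].
have D1D : D1 `<=` D by move=> t [[]].
rewrite (_ : _ `&` _ = D1 `&` [set t | transv m (g t) = transv m (f t)]).
  apply: meas_set_eq => //.
    exact: (meas_fun_transversal_coord Hc (meas_funS HX mg mD1 D1D) (fun t dt => dt.2.2)).
  exact: (meas_fun_transversal_coord Hc (meas_funS HX mf mD1 D1D) (fun t dt => dt.1.2)).
apply/seteqP; split=> t /=; first by move=> [Dt [_ ef eg ->]]; do !split.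
by move=> [[[Dt ef] [_ eg]] ->].
Qed.

Lemma rat_chain_meas l m D (f g : X -> X) : measX D -> meas_fun measX measX D f ->
  meas_fun measX measX D g -> measX (D `&` [set t | rat_chain l m (f t) (g t)]).
Proof.
elim: l D f => [|[k q] l IH] D f mD mf mg; first exact: rat_chain_nil_meas.
have [Ak|nAk] := pselect (At (e k)); last first.
  by rewrite (_ : _ `&` _ = set0); [apply: (sigma0 HX)|apply/seteqP; split=> t // [_ []]].
rewrite (_ : _ `&` _ = link_dom D f k q `&` [set t | rat_chain l m (plaque_point k q (f t)) (g t)]).
  apply: IH; first exact: link_dom_meas.
    exact: meas_fun_plaque_point.
  exact: (meas_funS HX mg (link_dom_meas q mf Ak) (@link_dom_sub _ _ _ _)).
apply/seteqP; split=> t /=; first by move=> [Dt [_ ef range chain]]; do !split.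
by move=> [[Dt [ef range]] chain].
Qed.

Lemma XRmeas_chain_path l m D (f g : X -> X) B : measX D ->
  meas_fun measX measX D f -> meas_fun measX measX D g ->
  (forall t, D t -> rat_chain l m (f t) (g t)) -> measX B ->
  XR ((D `*` setT) `&` [set p | B (chain_path l m (f p.1) (g p.1) p.2)]).
Proof.
move=> + + mg; elim: l f => [|[k q] l IH] f mD mf chain mB /=.
  have [Am|nAm] := pselect (At (e m)); last first.
    rewrite (_ : _ `&` _ = set0); first exact: (sigma0 (XRmeas_sigma measX)).
    by apply/seteqP; split=> -[t s] // [[/chain[]]].
  have Hc := HAt Am; have eg t : D t -> (e m).1 (g t) by move=> /chain[].
  apply: (XRmeas_plaque_segment x0 HX Hc mD mf _ (meas_coords_chart Hc mg eg)) => //.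
    by move=> t /chain[].
  move=> t Dt; have [_ _ _ <-] := chain t Dt.
  by rewrite -surjective_pairing; apply: chart_range_map; apply: eg.
have [Ak|nAk] := pselect (At (e k)); last first.
  rewrite (_ : _ `&` _ = set0); first exact: (sigma0 (XRmeas_sigma measX)).
  by apply/seteqP; split=> -[t s] // [[/chain[]]].
apply: (@XRmeas_path_concat _ _ HX D (fun t => plaque_segment x0 (e k) (f t) (ratv q))
  (fun t => chain_path l m (plaque_point k q (f t)) (g t))) => //.
  apply: (XRmeas_plaque_segment x0 HX (HAt Ak) mD mf _ (meas_coords_cst (ratv q) mD)) => //.
  - by move=> t /chain[].
  - by move=> t /chain[].
apply: (IH (fun t => plaque_point k q (f t))) => //; last by move=> t /chain[].
apply: (meas_funS HX (meas_fun_plaque_point q mf Ak)) => // t Dt.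
by have [_ ef range _] := chain t Dt.
Qed.

Section Reachability.
Hypothesis cover : forall x, exists k, At (e k) /\ (e k).1 x.
Variable t : X.

Let reachable := [set z | exists l m, rat_chain l m t z].

Lemma open_reachable : open reachable.
Proof.
apply: open_local => y [l [m chain]]; have [Am ey] := rat_chain_last chain.
exists [set x | (e m).1 x /\ transv m x = transv m y]; split => //.
  exact: (open_plaque (HAt Am)).
by move=> w [ew wy]; exists l, m; apply: rat_chain_plaque chain ew wy.
Qed.

(* If some [y] in the plaque [P] of [z] is reachable, then the plaque of [y] in
   the last chart of its chain meets [P] in an open set, which contains a point
   with rational coordinates; one more link to it closes the chain in [P]. *)
Lemma open_unreachable : open (~` reachable).
Proof.
apply: open_local => z unreach_z; have [k [Ak ez]] := cover z.
set P := [set x | (e k).1 x /\ transv k x = transv k z].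
exists P; split => //; first exact: (open_plaque (HAt Ak)).
move=> y [ey yz] [l [m chain]]; apply: unreach_z.
have [Am ey'] := rat_chain_last chain; have Hc := HAt Am.
set V := P `&` [set x | (e m).1 x /\ transv m x = transv m y].
have oV : open V by apply: openI; [exact: (open_plaque (HAt Ak))|exact: (open_plaque Hc)].
have y_in : [set v | chart_image x0 (e m) V (v, transv m y)] ((e m).2 y).1.
  rewrite /= -surjective_pairing; split; first exact: chart_range_map.
  by rewrite (chart_invK x0 Hc ey').
have [eps eps0 ball_V] := chart_image_open Hc oV y_in.
have [q near_y] := ratv_dense ((e m).2 y).1 eps0.
have [range_q [[ek_q qz] _]] := ball_V (ratv q) near_y.
by exists (rcons l (m, q)), k; apply: rat_chain_rcons chain range_q _.
Qed.

Lemma leaf_rat_chain z : leaf t z -> exists l m, rat_chain l m t z.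
Proof.
have reach_t : reachable t by have [k [Ak et]] := cover t; exists [::], k.
have closed_reach : closed reachable.
  by rewrite -[reachable]setCK closedC; exact: open_unreachable.
set K := connected_component setT t.
have KR : K `&` reachable = K.
  apply: (component_connected (x := t)).
  - by exists t; split => //; apply: connected_component_refl.
  - by exists reachable => //; exact: open_reachable.
  - by exists reachable.
by move=> Kz; have [] : (K `&` reachable) z by rewrite KR.
Qed.

End Reachability.
End RationalChains.

Section HolonomyHomotopy.
Variables (X : topologicalType) (measX : set (set X)) (n : nat) (x0 : X).
Hypothesis HX : sigma_algebra setT measX.
Variable At : set (chart X n).
Hypothesis HAt : forall c, At c -> MT_chart measX c.1 c.2.
Variable e : nat -> chart X n.
Hypothesis cover : forall x, exists k, At (e k) /\ (e k).1 x.
Variables (T T' : set X) (h : X -> X).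
Hypothesis Hh : meas_holonomy measX T T' h.
Local Notation code := (seq (nat * 'rV[rat]_n) * nat)%type.
Local Notation rat_chain := (rat_chain x0 At e).

(* Chains are coded by natural numbers through [pickle]; the homotopy at [t]
   follows the chain with the least code leading from [t] to [h t]. *)
Definition code_dom (k : nat) : set X :=
  [set t | T t /\ if @unpickle code k is Some d then rat_chain d.1 d.2 t (h t) else False].

Definition least_code_dom (k : nat) : set X :=
  code_dom k `&` \bigcap_j (if (j < k)%N then ~` code_dom j else setT).

Definition least_code (t : X) : nat := xget 0%N [set k | least_code_dom k t].

Definition holonomy_homotopy (p : X * R) : X :=
  if @unpickle code (least_code p.1) is Some d then chain_path x0 e d.1 d.2 p.1 (h p.1) p.2
  else p.1.

Lemma transversal_meas : measX T.
Proof. by case: Hh => -[]. Qed.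

Lemma meas_fun_id : meas_fun measX measX T id.
Proof. by move=> B mB; apply: (sigmaI HX) => //; exact: transversal_meas. Qed.

Lemma meas_fun_holonomy : meas_fun measX measX T h.
Proof.
case: Hh => _ [mT' _] [hT _ _] hmeas _ B mB.
rewrite (_ : _ `&` _ = T `&` h @^-1` (B `&` T')).
  by apply/(hmeas _ (@subIsetr _ _ _)); apply: (sigmaI HX).
by apply/seteqP; split=> t /= [Tt]; [split=> //; split=> //; apply: hT|case].
Qed.

Lemma code_dom_meas k : measX (code_dom k).
Proof.
rewrite /code_dom; case: (unpickle k) => [[l m]|] /=.
  exact: (rat_chain_meas x0 HX HAt e l m transversal_meas meas_fun_id meas_fun_holonomy).
by rewrite (_ : [set t | _] = set0); [apply: (sigma0 HX)|apply/seteqP; split=> t // []].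
Qed.

Lemma least_code_dom_meas k : measX (least_code_dom k).
Proof.
apply: (sigmaI HX); first exact: code_dom_meas.
apply: (bigcapT_sigma HX) => j; case: ifP => _; last exact: (sigmaT HX).
by apply: (sigmaC HX); apply: code_dom_meas.
Qed.

Lemma least_code_dom_uniq k j t : least_code_dom k t -> least_code_dom j t -> k = j.
Proof.
move=> [ck lk] [cj lj]; case: (ltngtP k j) => // [kj|jk].
  by have := lj k I; rewrite kj.
by have := lk j I; rewrite jk.
Qed.

Lemma least_code_domP t : T t -> least_code_dom (least_code t) t.
Proof.
move=> Tt; apply: (@xgetPex _ 0%N [set k | least_code_dom k t]).
case: Hh => _ _ _ _ /(_ t Tt) /(leaf_rat_chain x0 HAt cover)[l [m chain]].
have ex : exists k, `[< code_dom k t >].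
  by exists (pickle (l, m)); apply/asboolP; rewrite /code_dom pickleK.
case: (ex_minnP ex) => k /asboolP ck kmin; exists k; split=> // j _.
by case: ifP => // jk cj; have := kmin j (asboolT cj); rewrite leqNgt jk.
Qed.

Lemma holonomy_homotopyE t : T t -> exists d : code,
  [/\ @unpickle code (least_code t) = Some d, rat_chain d.1 d.2 t (h t) &
      forall s, holonomy_homotopy (t, s) = chain_path x0 e d.1 d.2 t (h t) s].
Proof.
move=> /least_code_domP[[_]]; rewrite /holonomy_homotopy /=.
by case: (unpickle (least_code t)) => // d chain _; exists d.
Qed.

Lemma holonomy_homotopy_meas A : measX A ->
  XRmeas measX ((T `*` setT) `&` holonomy_homotopy @^-1` A).
Proof.
move=> mA.
pose piece k : set (X * R) := if @unpickle code k is Some d then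
  (least_code_dom k `*` setT) `&` [set p | A (chain_path x0 e d.1 d.2 p.1 (h p.1) p.2)]
  else set0.
rewrite (_ : _ `&` _ = \bigcup_k piece k).
  apply: (bigcupT_sigma (XRmeas_sigma measX)) => k; rewrite /piece.
  case dk: (unpickle k) => [d|]; last exact: (sigma0 (XRmeas_sigma measX)).
  have lT : least_code_dom k `<=` T by move=> t [[]].
  apply: (XRmeas_chain_path HX HAt (least_code_dom_meas k)
    (meas_funS HX meas_fun_id (least_code_dom_meas k) lT)
    (meas_funS HX meas_fun_holonomy (least_code_dom_meas k) lT) _ mA).
  by move=> t [[_]]; rewrite dk.
apply/seteqP; split=> -[t s] /=.
  move=> [[Tt _] Ats]; exists (least_code t) => //; rewrite /piece.
  have [d [-> _ Hts]] := holonomy_homotopyE Tt.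
  by split; [split=> //; apply: least_code_domP|move: Ats; rewrite Hts].
move=> [k _]; rewrite /piece; case dk: (unpickle k) => [d|] //= [[lt _] Ats].
have Tt : T t by case: lt => -[].
split; first by split.
by rewrite /holonomy_homotopy /= (least_code_dom_uniq (least_code_domP Tt) lt) dk.
Qed.

Lemma holonomy_homotopyP : [/\ meas_homotopy measX T holonomy_homotopy,
  (forall t, T t -> holonomy_homotopy (t, 0) = t) &
  (forall t, T t -> holonomy_homotopy (t, 1) = h t)].
Proof.
split; [split; last exact: holonomy_homotopy_meas| |] => t /holonomy_homotopyE[d [_ chain Hts]].
- rewrite (_ : (fun s => _) = chain_path x0 e d.1 d.2 t (h t)); last exact: funext.
  exact: (continuous_chain_path HAt chain).
- by rewrite Hts (chain_path0 HAt chain).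
- by rewrite Hts (chain_path1 HAt chain).
Qed.

End HolonomyHomotopy.

Lemma atlas_enumeration (X : topologicalType) (n : nat) (At : set (chart X n)) :
  countable At -> (forall x, exists2 c, At c & c.1 x) ->
  exists e : nat -> chart X n, forall x, exists k, At (e k) /\ (e k).1 x.
Proof.
move=> /countable_injP[f f_inj] cover.
pose c0 : chart X n := (set0, fun=> (0, 0)).
exists (fun k => if pselect (exists c, At c /\ f c = k) is left ex then projT1 (cid ex) else c0).
move=> x; have [c Ac cx] := cover x; exists (f c).
case: pselect => [ex|]; last by case; exists c.
case: (cid ex) => c' /= [Ac' fc'].
by rewrite (f_inj c' c) ?in_setE.
Qed.

Lemma meas_homotopy_empty (X : topologicalType) (measX : set (set X)) (T : set X) (h : X -> X) :
  (X -> False) -> exists H : X * R -> X,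
    [/\ meas_homotopy measX T H, (forall t, T t -> H (t, 0) = t) &
        (forall t, T t -> H (t, 1) = h t)].
Proof.
move=> nX; exists fst; split=> [|t|t]; try by case: (nX t).
split=> [t|A _]; first by case: (nX t).
by rewrite (_ : _ `&` _ = set0); [apply: (sigma0 (XRmeas_sigma measX))|apply/seteqP; split=> -[t]].
Qed.

Theorem mainTheorem8 (X : topologicalType) (measX : set (set X)) (n : nat)
    (Hlam : meas_lamination measX n)
    (Hreg : exists At, regular_atlas measX (n := n) At)
    (T T' : set X) (h : X -> X) (Hh : meas_holonomy measX T T' h) :
  exists H : X * R -> X,
    [/\ meas_homotopy measX T H,
        (forall t, T t -> H (t, 0) = t) &
        (forall t, T t -> H (t, 1) = h t)].
Proof.
(* Only the countable atlas underlying the regular one is needed; an empty [X]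
   is set apart because chart inverses need a default point. *)
case: Hlam => HX _; case: Hreg => At [[countable_At HAt cover] _].
have [e e_cover] := atlas_enumeration countable_At cover.
have [[x0 _]|nX] := pselect (exists x : X, True); last first.
  by apply: meas_homotopy_empty => x; apply: nX; exists x.
exists (holonomy_homotopy x0 At e T h).
exact: (holonomy_homotopyP x0 HX HAt e_cover Hh).
Qed.
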